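(* Let $t\in\{1,2,3,4,5,6\}$, let $e_1,\dots,e_t$ be the standard basis of $\mathbb{F}_2^t$, and let $M$ be a maximal Sidon set of $\mathbb{F}_2^t$. Then there exists an affine permutation $T\colon\mathbb{F}_2^t\to\mathbb{F}_2^t$ such that $T(M)$ equals: for $t=1$: $\{0,e_1\}=\mathbb{F}_2^1$ (size 2); for $t=2$: $\{0,e_1,e_2\}=\mathbb{F}_2^2\setminus\{e_1+e_2\}$ (size 3); for $t=3$: $\{0,e_1,e_2,e_3\}$ (size 4); for $t=4$: $\{0,e_1,e_2,e_3,e_4,e_1+e_2+e_3+e_4\}$ (size 6); for $t=5$: $\{0,e_1,e_2,e_3,e_4,e_5,e_1+e_2+e_3+e_4\}$ (size 7); for $t=6$: either $M_{6a}=\{0,e_1,e_2,e_3,e_4,e_5,e_6,e_1+e_2+e_3+e_4,e_1+e_2+e_5+e_6\}$ (size 9) or $M_{6b}=\{0,e_1,e_2,e_3,e_4,e_5,e_6,e_1+e_2+e_3+e_4+e_5+e_6\}$ (size 8).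
   Context: $\mathbb{F}_2^t$ is the $t$-dimensional vector space over $\mathbb{F}_2$. A subset $M\subseteq \mathbb{F}_2^t$ is Sidon if $m_1+m_2\neq m_3+m_4$ for all pairwise distinct $m_1,m_2,m_3,m_4\in M$. A Sidon set $M$ is maximal if $M=S$ for every Sidon set $S$ with $M\subseteq S\subseteq\mathbb{F}_2^t$. An affine permutation of $\mathbb{F}_2^t$ is a map $x\mapsto L(x)+a$ with $L$ an invertible linear map and $a\in\mathbb{F}_2^t$. *)

From mathcomp Require Import all_boot all_order all_algebra all_fingroup.
Set Implicit Arguments. Unset Strict Implicit. Unset Printing Implicit Defensive.
Import GRing.Theory.
Local Open Scope ring_scope.

Definition sidon (t : nat) (M : {set 'rV['F_2]_t}) : Prop :=
  forall m1 m2 m3 m4 : 'rV['F_2]_t,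
    m1 \in M -> m2 \in M -> m3 \in M -> m4 \in M ->
    m1 != m2 -> m1 != m3 -> m1 != m4 -> m2 != m3 -> m2 != m4 -> m3 != m4 ->
    m1 + m2 != m3 + m4.

Definition maximal_sidon (t : nat) (M : {set 'rV['F_2]_t}) : Prop :=
  sidon M /\ forall S : {set 'rV['F_2]_t}, sidon S -> M \subset S -> M = S.

(* Standard basis vector e_i (1-indexed): e t i has a 1 in coordinate i-1. *)
Definition e (t : nat) (i : nat) : 'rV['F_2]_t :=
  \row_(j < t) (if (j : nat) == i.-1 then 1 else 0).

Definition affine_image (t : nat) (L : 'M['F_2]_t) (a : 'rV['F_2]_t)
  (M : {set 'rV['F_2]_t}) : {set 'rV['F_2]_t} :=
  [set x *m L + a | x in M].

Definition normal_forms (t : nat) : seq {set 'rV['F_2]_t} :=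
  let e := e t in
  if t == 1%N then [:: [set 0; e 1%N]]
  else if t == 2%N then [:: [set 0; e 1%N; e 2%N]]
  else if t == 3%N then [:: [set 0; e 1%N; e 2%N; e 3%N]]
  else if t == 4%N then
    [:: [set 0; e 1%N; e 2%N; e 3%N; e 4%N; e 1%N + e 2%N + e 3%N + e 4%N]]
  else if t == 5%N then
    [:: [set 0; e 1%N; e 2%N; e 3%N; e 4%N; e 5%N; e 1%N + e 2%N + e 3%N + e 4%N]]
  else if t == 6%N then
    [:: [set 0; e 1%N; e 2%N; e 3%N; e 4%N; e 5%N; e 6%N;
          e 1%N + e 2%N + e 3%N + e 4%N; e 1%N + e 2%N + e 5%N + e 6%N];
        [set 0; e 1%N; e 2%N; e 3%N; e 4%N; e 5%N; e 6%N;
          e 1%N + e 2%N + e 3%N + e 4%N + e 5%N + e 6%N]]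
  else [::].

(** In characteristic 2 a Sidon set contains no sum of three of its distinct
    elements, while a vector outside [M + M + M] can be added to a Sidon set [M].
    Hence a maximal Sidon set satisfies [M + M + M = F_2^t], its differences
    [m - m0] span [F_2^t], and an affine permutation moves it onto a set
    containing [0, e_1, ..., e_t].  For [t <= 6] a depth-first search through
    all Sidon sets obtained from [{0, e_1, ..., e_t}] by adding further vectors
    shows that each of them either leaves a vector outside [M + M + M], hence
    is not maximal, or is the image of a normal form under an affine map that the
    search exhibits; that map is invertible because its image contains
    [0, e_1, ..., e_t]. *)
From mathcomp Require Import all_boot all_order all_algebra all_fingroup.
Set Implicit Arguments. Unset Strict Implicit. Unset Printing Implicit Defensive.
Import GRing.Theory.

(* Under the call-by-value strategy of [vm_compute], [has] evaluates its
   whole list; [has_lazy] stops at the first witness. *)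
Fixpoint has_lazy (T : Type) (p : T -> bool) (s : seq T) : bool :=
  if s is x :: s' then (if p x then true else has_lazy p s') else false.

Lemma has_lazyE (T : Type) (p : T -> bool) s : has_lazy p s = has p s.
Proof. by elim: s => //= x s ->; case: (p x). Qed.

Lemma has_lazyP (T : eqType) (p : pred T) s :
  reflect (exists2 x, x \in s & p x) (has_lazy p s).
Proof. by rewrite has_lazyE; apply: hasP. Qed.

Fixpoint all_extensions (T : Type) (ok : seq T -> T -> bool) (P : seq T -> bool)
    (l C : seq T) : bool :=
  if C is c :: C' then
    (if ok l c then all_extensions ok P (rcons l c) C' else true)
    && all_extensions ok P l C'
  else P l.

Lemma all_extensions_subseq (T : eqType) (ok : seq T -> T -> bool)
    (P : seq T -> bool) (Q : seq T -> Prop) (l C X : seq T) :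
    (forall s1 s2, Q (s1 ++ s2) -> Q s1) -> (forall s c, Q (rcons s c) -> ok s c) ->
  all_extensions ok P l C -> subseq X C -> Q (l ++ X) -> P (l ++ X).
Proof.
move=> Qprefix Qok; elim: C l X => [|c C IH] l X /=.
  by move=> Pl /eqP ->; rewrite cats0.
case/andP=> incl skip; case: X => [|x X] /=.
  by move=> _; apply: IH skip (sub0seq C).
case: eqP => [-> | _] sXC QX; last exact: IH skip sXC QX.
rewrite -cat_rcons in QX *; move: incl; rewrite (Qok _ _ (Qprefix _ _ QX)).
by move/IH; apply.
Qed.

Fixpoint has_uniq_tuple (T : eqType) (k : nat) (prune test : seq T -> bool)
    (pre s : seq T) : bool :=
  if k is k'.+1 then
    has_lazy (fun x => if x \in pre then false
      else if prune (rcons pre x) then has_uniq_tuple k' prune test (rcons pre x) s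
      else false) s
  else test pre.

Lemma has_uniq_tuple_sound (T : eqType) k (prune test : seq T -> bool)
    (pre s : seq T) :
  has_uniq_tuple k prune test pre s -> exists p, test p.
Proof.
elim: k pre => [|k IH] pre /=; first by exists pre.
case/has_lazyP => x _; case: (x \in pre) => //.
by case: (prune _) => // /IH.
Qed.

(* [vm_compute] handles vectors of [F_2^t] as bit lists of length [t];
   [vec] below decodes them. *)
Notation bitv := (seq bool).

Fixpoint bxor (s s' : bitv) : bitv :=
  match s, s' with
  | x :: s1, y :: s2 => addb x y :: bxor s1 s2
  | [::], _ => s'
  | _, [::] => s
  end.

Fixpoint cube (n : nat) : seq bitv :=
  if n is n'.+1 then [seq false :: s | s <- cube n'] ++ [seq true :: s | s <- cube n']
  else [:: [::]].

Lemma mem_cube n s : (s \in cube n) = (size s == n).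
Proof.
elim: n s => [|n IH] [|b s] //=; rewrite mem_cat.
- by apply/orP => -[] /mapP [].
- rewrite eqSS -IH; apply/orP/idP => [[] /mapP [s' ? [_ ->]] // | sn].
  by case: b; [right | left]; apply: map_f.
Qed.

Lemma size_bxor s s' : size (bxor s s') = maxn (size s) (size s').
Proof. by elim: s s' => [|x s IH] [|y s'] //=; rewrite ?maxn0 ?IH ?maxnSS. Qed.

Lemma bxor_cube n s s' : s \in cube n -> s' \in cube n -> bxor s s' \in cube n.
Proof. by rewrite !mem_cube size_bxor => /eqP -> /eqP ->; rewrite maxnn. Qed.

Section BitCheck.
Variable t : nat.

Definition zeros : bitv := nseq t false.
Definition ev (i : nat) : bitv := mkseq (fun j => j == i) t.
Definition basis_bits : seq bitv := zeros :: mkseq ev t.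
Definition ev_sum (I : seq nat) : bitv := foldr (fun i => bxor (ev i)) zeros I.

Definition normal_form_bits : seq (seq bitv) :=
  match t with
  | 1 | 2 | 3 => [:: basis_bits]
  | 4 | 5 => [:: rcons basis_bits (ev_sum [:: 0; 1; 2; 3])]
  | 6 => [:: basis_bits ++ [:: ev_sum [:: 0; 1; 2; 3]; ev_sum [:: 0; 1; 4; 5]];
            rcons basis_bits (ev_sum (iota 0 6))]
  | _ => [::]
  end%N.

Definition bit_length (n : bitv) : nat := size n - find id (rev n).

Definition linc (rows : seq bitv) (s : bitv) : bitv :=
  foldr (fun i acc => if nth false s i then bxor (nth [::] rows i) acc else acc)
    zeros (iota 0 t).

(* The affine map [n |-> p0 + sum_i n_i (p_i + p0)], sending [0] to [p0]
   and [e_i] to [p_i]. *)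
Definition affine_bits (p0 : bitv) (ps : seq bitv) (n : bitv) : bitv :=
  bxor p0 (linc [seq bxor p0 p | p <- ps] n).

Definition no_distinct_sum3 (l : seq bitv) (c : bitv) : bool :=
  all (fun a => all (fun b => all (fun d =>
    [|| a == b, a == d, b == d | bxor a (bxor b d) != c]) l) l) l.

Definition extendable (l : seq bitv) : bool :=
  has_lazy (fun z => ~~ has_lazy (fun a => has_lazy (fun b =>
    bxor z (bxor a b) \in l) l) l) (cube t).

Definition same_setb (s1 s2 : seq bitv) : bool :=
  all (fun x => x \in s2) s1 && all (fun x => x \in s1) s2.

(* Search for distinct [p0, p1, ..., pt] in [l] such that
   [affine_bits p0 [:: p1; ...; pt]] maps [N] onto [l]; a partial tuple
   [p0, ..., pk] is abandoned as soon as it sends outside [l] an element of [N]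
   whose last nonzero coordinate is the k-th. *)
Definition affine_equivb (N l : seq bitv) : bool :=
  if size N == size l then
    has_uniq_tuple t.+1
      (fun p => if p is p0 :: ps then
         all (fun n => if bit_length n == size ps then affine_bits p0 ps n \in l
                       else true) N
       else true)
      (fun p => if p is p0 :: ps then same_setb [seq affine_bits p0 ps n | n <- N] l
       else false)
      [::] l
  else false.

Definition leaf_classified (l : seq bitv) : bool :=
  if extendable l then true else has (fun N => affine_equivb N l) normal_form_bits.

Definition classification_check : bool :=
  all_extensions no_distinct_sum3 leaf_classified basis_bits
    [seq s <- cube t | s \notin basis_bits].

End BitCheck.

Arguments ev : simpl never.
Arguments bxor : simpl never.

Lemma classification_check_small t : (1 <= t <= 6)%N -> classification_check t.
Proof.
case/andP; case: t => [|[|[|[|[|[|[|t]]]]]]] t_gt0 t_le6;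
  [by [] | vm_compute; reflexivity .. | by []].
Qed.

Local Open Scope ring_scope.

Section Vectors.
Variable t : nat.
Notation V := 'rV['F_2]_t.
Implicit Types (M S : {set V}) (v w x y z : V).

Lemma addvv v : v + v = 0.
Proof. by apply/rowP => j; rewrite !mxE addrr_pchar2 // pchar_Fp. Qed.

Lemma oppv v : - v = v.
Proof. by rewrite -[LHS]add0r -(addvv v) addrK. Qed.

Lemma addvK v w : w + v + v = w.
Proof. by rewrite -addrA addvv addr0. Qed.

Lemma addv_eq0 x y : (x + y == 0) = (x == y).
Proof. by rewrite -[y in x + y]oppv subr_eq0. Qed.

Lemma addv_eq_id x y : (x + y == y) = (x == 0).
Proof. by rewrite -subr_eq0 addrK. Qed.

Lemma addv_move x y z : (x + y == z) = (x == z + y).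
Proof. by rewrite -(inj_eq (addIr y)) addvK. Qed.

Lemma affine_image_comp L1 a1 L2 a2 S :
  affine_image L2 a2 (affine_image L1 a1 S) = affine_image (L1 *m L2) (a1 *m L2 + a2) S.
Proof.
rewrite /affine_image -imset_comp; apply: eq_imset => x /=.
by rewrite mulmxDl mulmxA addrA.
Qed.

Lemma affine_image1 S : affine_image 1%:M 0 S = S.
Proof.
by rewrite /affine_image; under eq_imset do rewrite mulmx1 addr0; apply: imset_id.
Qed.

Lemma affine_imageK L a S : L \in unitmx ->
  affine_image (invmx L) (- (a *m invmx L)) (affine_image L a S) = S.
Proof. by move=> UL; rewrite affine_image_comp mulmxV // subrr affine_image1. Qed.

Lemma affine_imageKV L a S : L \in unitmx ->
  affine_image L a (affine_image (invmx L) (- (a *m invmx L)) S) = S.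
Proof.
by move=> UL; rewrite affine_image_comp mulVmx // mulNmx mulmxKV // addNr affine_image1.
Qed.

Lemma affine_image_unitmx P p S M : affine_image P p S = M ->
  0 \in M -> (forall i, delta_mx 0 i \in M) -> P \in unitmx.
Proof.
move=> <- /imsetP [n0 _ E0] Hdelta; rewrite -row_full_unit -sub1mx.
apply/row_subP => i; rewrite row1; have /imsetP [n _ En] := Hdelta i.
suff -> : delta_mx 0 i = (n - n0) *m P by apply: submxMl.
by rewrite mulmxBl -[n *m P](addrK p) -[n0 *m P](addrK p) -En -E0 sub0r opprK subrK.
Qed.

Lemma sidon_subset M S : sidon S -> M \subset S -> sidon M.
Proof. by move=> HS /subsetP sMS m1 m2 m3 m4 /sMS ? /sMS ? /sMS ? /sMS ?; apply: HS. Qed.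

Lemma sidon_affine L a S : L \in unitmx -> sidon S -> sidon (affine_image L a S).
Proof.
move=> UL HS m1 m2 m3 m4 /imsetP [x1 H1 ->] /imsetP [x2 H2 ->].
move=> /imsetP [x3 H3 ->] /imsetP [x4 H4 ->].
have inj_f : injective (fun x : V => x *m L + a).
  by move=> x y /addIr /(can_inj (mulmxK UL)).
rewrite !(inj_eq inj_f) => n12 n13 n14 n23 n24 n34.
rewrite addrACA [X in _ != X]addrACA addvv !addr0 -!mulmxDl.
by rewrite (inj_eq (can_inj (mulmxK UL))) HS.
Qed.

Lemma maximal_sidon_affine L a M : L \in unitmx -> maximal_sidon M ->
  maximal_sidon (affine_image L a M).
Proof.
move=> UL [HS HM]; split => [|S SS sub]; first exact: sidon_affine.
set S' := affine_image (invmx L) (- (a *m invmx L)) S.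
have sub' : M \subset S' by rewrite -[M](affine_imageK a M UL) imsetS.
rewrite (HM S' _ sub') ?affine_imageKV //.
by apply: sidon_affine; rewrite ?unitmx_inv.
Qed.

Lemma sidon_distinct_sum3_notin M a b d : sidon M ->
    a \in M -> b \in M -> d \in M -> a != b -> a != d -> b != d ->
  a + b + d \notin M.
Proof.
move=> HS aM bM dM ab ad bd; apply/negP => sM.
suff : a + b != d + (a + b + d) by rewrite [d + _]addrC addvK eqxx.
apply: HS => //.
- by rewrite eq_sym -addrA addrC addv_eq_id addv_eq0.
- by rewrite eq_sym addrAC addv_eq_id addv_eq0.
- by rewrite eq_sym addv_eq_id addv_eq0.
Qed.

Lemma sidon_setU1 M z : sidon M ->
    (forall a b c, a \in M -> b \in M -> c \in M -> z != a + b + c) ->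
  sidon (z |: M).
Proof.
move=> HS Hz.
have Hz' a b c : a \in M -> b \in M -> c \in M -> z + a != b + c.
  by move=> aM bM cM; rewrite addv_move; apply: Hz.
move=> m1 m2 m3 m4; rewrite !in_setU1.
case/orP => [/eqP -> | h1]; case/orP => [/eqP -> | h2];
  case/orP => [/eqP -> | h3]; case/orP => [/eqP -> | h4];
  rewrite ?eqxx //= => n12 n13 n14 n23 n24 n34.
- exact: Hz'.
- by rewrite addrC; apply: Hz'.
- by rewrite eq_sym; apply: Hz'.
- by rewrite eq_sym addrC; apply: Hz'.
- exact: HS.
Qed.

Lemma maximal_sidon_sum3 M z : maximal_sidon M ->
  exists a b c, [/\ a \in M, b \in M, c \in M & z = a + b + c].
Proof.
move=> [HS HM].
have [|none] := boolP [exists a in M, exists b in M, exists c in M, z == a + b + c].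
  case/exists_inP => a aM /exists_inP [b bM /exists_inP [c cM /eqP ->]].
  by exists a, b, c.
suff zM : z \in M by exists z, z, z; rewrite addvv add0r.
rewrite (HM (z |: M)) ?setU11 ?subsetUr //; apply: sidon_setU1 => // a b c aM bM cM.
apply: contraNneq none => ->; apply/exists_inP; exists a => //.
by apply/exists_inP; exists b => //; apply/exists_inP; exists c.
Qed.

Lemma maximal_sidon_normalize M : maximal_sidon M ->
  exists L a, [/\ L \in unitmx, 0 \in affine_image L a M
                & forall i, delta_mx 0 i \in affine_image L a M].
Proof.
move=> HM; have [m0 [_ [_ [m0M _ _ _]]]] := maximal_sidon_sum3 0 HM.
pose D := \matrix_(i < #|M|) (enum_val i + m0).
have inD m : m \in M -> ((m + m0)%R <= D)%MS.
  move=> mM; have <- : row (enum_rank_in m0M m) D = m + m0.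
    by rewrite rowK enum_rankK_in.
  exact: row_sub.
have fullD : row_full D.
  rewrite -sub1mx; apply/row_subP => i.
  have [a [b [c [aM bM cM E]]]] := maximal_sidon_sum3 (row i 1%:M + m0) HM.
  have -> : row i 1%:M = (a + m0) + (b + m0) + (c + m0).
    by rewrite [(a + m0) + _]addrACA addvv addr0 addrA -E addvK.
  by apply: addmx_sub; [apply: addmx_sub|]; apply: inD.
pose P := rowsub (fullrankfun fullD) D.
have UP : P \in unitmx := fullrowsub_unit fullD.
exists (invmx P), (- (m0 *m invmx P)); split; first by rewrite unitmx_inv.
  by apply/imsetP; exists m0 => //; rewrite subrr.
move=> i; apply/imsetP; exists (enum_val (fullrankfun fullD i)); first exact: enum_valP.
by rewrite -row1 -(mulmxV UP) row_mul row_rowsub rowK oppv mulmxDl.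
Qed.

Definition vec (s : bitv) : V := \row_(j < t) (nth false s j)%:R.
Definition vecs (l : seq bitv) : {set V} := [set v | v \in map vec l].
Definition mx_of_rows (rows : seq bitv) : 'M['F_2]_t :=
  \matrix_(i < t) vec (nth [::] rows i).

Lemma in_vecs v l : (v \in vecs l) = (v \in map vec l).
Proof. by rewrite inE. Qed.

Lemma vecs_eq l1 l2 : l1 =i l2 -> vecs l1 = vecs l2.
Proof.
move=> E; apply/setP => v; rewrite !in_vecs.
by apply/mapP/mapP => -[s sl ->]; exists s; rewrite ?E // -E.
Qed.

Lemma vecs_map f g l : (forall s, vec (f s) = g (vec s)) ->
  vecs (map f l) = [set g v | v in vecs l].
Proof.
move=> fg; apply/setP => v; rewrite in_vecs; apply/mapP/imsetP.
  by case=> _ /mapP [s sl ->] ->; exists (vec s); rewrite ?in_vecs ?map_f.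
by case=> _ /[!in_vecs] /mapP [s sl ->] ->; exists (f s); rewrite ?map_f.
Qed.

Lemma nth_bxor s s' i : nth false (bxor s s') i = addb (nth false s i) (nth false s' i).
Proof. by elim: s s' i => [|x s IH] [|y s'] [|i] //=; rewrite ?addbF. Qed.

Lemma vecD s s' : vec (bxor s s') = vec s + vec s'.
Proof.
apply/rowP => j; rewrite !mxE nth_bxor.
case: (nth false s j); case: (nth false s' j); rewrite ?addr0 ?add0r //.
by rewrite addrr_pchar2 // pchar_Fp.
Qed.

Lemma vec_zeros : vec (zeros t) = 0.
Proof. by apply/rowP => j; rewrite !mxE nth_nseq if_same. Qed.

Lemma vec_ev (i : 'I_t) : vec (ev t i) = delta_mx 0 i.
Proof. by apply/rowP => j; rewrite !mxE nth_mkseq. Qed.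

Lemma vec_inj : {in cube t &, injective vec}.
Proof.
move=> s s'; rewrite !mem_cube => /eqP st /eqP s't E.
apply: (@eq_from_nth _ false); rewrite ?st ?s't // => i it.
have /eqP := congr1 (fun v : V => v 0 (Ordinal it)) E; rewrite !mxE /=.
by case: (nth false s i); case: (nth false s' i); rewrite // eq_sym oner_eq0.
Qed.

Lemma mem_vecs s l : s \in cube t -> {subset l <= cube t} ->
  (vec s \in vecs l) = (s \in l).
Proof.
move=> sc lc; rewrite in_vecs; apply/mapP/idP => [[s' s'l E] | sl]; last by exists s.
by rewrite (vec_inj sc (lc _ s'l) E).
Qed.

Lemma vec_surj v : exists2 s, s \in cube t & v = vec s.
Proof.
exists [seq v 0 j != 0 | j <- enum 'I_t].
  by rewrite mem_cube size_map size_enum_ord.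
apply/rowP => j; rewrite mxE (nth_map j) ?size_enum_ord // nth_ord_enum.
by case: (v 0 j) => [[|[|]] //= ?]; apply/val_inj.
Qed.

Lemma vec_linc rows s : vec (linc t rows s) = vec s *m mx_of_rows rows.
Proof.
pose F i := (nth false s i)%:R *: vec (nth [::] rows i).
rewrite mulmx_sum_row (eq_bigr (fun i : 'I_t => F i)) => [|i _]; last by rewrite rowK mxE.
rewrite -(big_mkord xpredT F) /index_iota subn0 /linc.
elim: (iota 0 t) => [|i r IH]; first by rewrite big_nil vec_zeros.
rewrite big_cons /F /=; case: (nth false s i); rewrite ?vecD IH ?scale1r //.
by rewrite scale0r add0r.
Qed.

Lemma sidon_no_distinct_sum3 l c : {subset rcons l c <= cube t} ->
  sidon (vecs (rcons l c)) -> no_distinct_sum3 l c.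
Proof.
move=> lc HS; have inl s : s \in l -> s \in rcons l c.
  by move=> sl; rewrite mem_rcons in_cons sl orbT.
have inV s : s \in l -> vec s \in vecs (rcons l c).
  by move=> /inl sl; rewrite in_vecs map_f.
have neV s s' : s \in l -> s' \in l -> s != s' -> vec s != vec s'.
  by move=> /inl /lc sc /inl /lc s'c; apply: contra_neq => /vec_inj ->.
apply/allP => a al; apply/allP => b bl; apply/allP => d dl.
case: eqP => //= /eqP ab; case: eqP => //= /eqP ad; case: eqP => //= /eqP bd.
apply: contraNneq (sidon_distinct_sum3_notin HS (inV _ al) (inV _ bl) (inV _ dl)
  (neV _ _ al bl ab) (neV _ _ al dl ad) (neV _ _ bl dl bd)) => E.
by rewrite -addrA -!vecD E in_vecs map_f // mem_rcons mem_head.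
Qed.

Lemma maximal_sidon_not_extendable l : {subset l <= cube t} ->
  maximal_sidon (vecs l) -> ~~ extendable t l.
Proof.
move=> lc HM; rewrite /extendable has_lazyE; apply/hasPn => z zc; rewrite negbK.
have [a [b [c [aM bM cM E]]]] := maximal_sidon_sum3 (vec z) HM.
move: aM bM cM; rewrite !in_vecs => /mapP [sa sal Ea] /mapP [sb sbl Eb] /mapP [sc scl Ec].
apply/has_lazyP; exists sa => //; apply/has_lazyP; exists sb => //.
rewrite -mem_vecs ?bxor_cube ?zc ?lc //.
by rewrite !vecD -Ea -Eb E addrAC addvv add0r Ec in_vecs map_f.
Qed.

Lemma same_setbP s1 s2 : same_setb s1 s2 -> s1 =i s2.
Proof. by case/andP => /allP sub12 /allP sub21 x; apply/idP/idP => [/sub12 | /sub21]. Qed.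

Lemma affine_equivb_sound N l : affine_equivb t N l ->
    0 \in vecs l -> (forall i, delta_mx 0 i \in vecs l) ->
  exists L a, L \in unitmx /\ affine_image L a (vecs l) = vecs N.
Proof.
rewrite /affine_equivb; case: eqP => // _.
case/has_uniq_tuple_sound => -[//|p0 ps] /same_setbP Nl.
pose P := mx_of_rows [seq bxor p0 p | p <- ps].
have EN : affine_image P (vec p0) (vecs N) = vecs l.
  rewrite -(vecs_eq Nl) (@vecs_map _ (fun v => v *m P + vec p0)) // => s.
  by rewrite vecD vec_linc addrC.
move=> l0 ldelta; have UP := affine_image_unitmx EN l0 ldelta.
by exists (invmx P), (- (vec p0 *m invmx P)); rewrite unitmx_inv -EN affine_imageK.
Qed.

Lemma vec_basis_bits s : s \in basis_bits t ->
  vec s = 0 \/ exists i, vec s = delta_mx 0 i.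
Proof.
rewrite in_cons => /predU1P [-> | /mapP [i]]; first by left; rewrite vec_zeros.
rewrite mem_iota add0n => it ->; right.
by exists (Ordinal it); rewrite (vec_ev (Ordinal it)).
Qed.

Lemma basis_bits_cube : {subset basis_bits t <= cube t}.
Proof.
move=> s; rewrite mem_cube in_cons => /predU1P [-> | /mapP [i _ ->]].
  by rewrite size_nseq.
by rewrite size_mkseq.
Qed.

Lemma vecs_split M B : {subset map vec B <= M} ->
  M = vecs (B ++ [seq s <- [seq s <- cube t | s \notin B] | vec s \in M]).
Proof.
move=> BM; apply/setP => v; rewrite in_vecs map_cat mem_cat.
apply/idP/orP => [vM | [/BM // | /mapP [s]]]; last first.
  by rewrite mem_filter => /andP [sM _] ->.
have [s sc Ev] := vec_surj v; rewrite Ev in vM *.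
case sB: (s \in B); [left | right]; apply: map_f => //.
by rewrite !mem_filter sB sc vM.
Qed.

Lemma classification_sound M : classification_check t -> maximal_sidon M ->
    0 \in M -> (forall i, delta_mx 0 i \in M) ->
  exists L a, L \in unitmx /\ affine_image L a M \in map vecs (normal_form_bits t).
Proof.
move=> check HM M0 Mdelta; set B := basis_bits t.
have BM : {subset map vec B <= M}.
  by move=> _ /mapP [s /vec_basis_bits [|[i]] ->] ->.
have EM := vecs_split BM.
set X := [seq s <- [seq s <- cube t | s \notin B] | vec s \in M] in EM.
have lc : {subset B ++ X <= cube t}.
  move=> s; rewrite mem_cat => /orP [/basis_bits_cube // |].
  by rewrite !mem_filter => /and3P [].
have HM' : maximal_sidon (vecs (B ++ X)) by rewrite -EM.
pose Q s := sidon (vecs s) /\ {subset s <= cube t}.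
have Qprefix s1 s2 : Q (s1 ++ s2) -> Q s1.
  case=> HS sub; split => [|s s1s]; last by apply: sub; rewrite mem_cat s1s.
  apply: sidon_subset HS _; apply/subsetP => v.
  by rewrite !in_vecs map_cat mem_cat => ->.
have Qok s c : Q (rcons s c) -> no_distinct_sum3 s c.
  by case=> HS sub; apply: sidon_no_distinct_sum3.
have := all_extensions_subseq Qprefix Qok check (filter_subseq _ _) (conj HM'.1 lc).
rewrite /leaf_classified (negbTE (maximal_sidon_not_extendable lc HM')).
case/hasP => N NF /affine_equivb_sound; rewrite -EM => /(_ M0 Mdelta) [L [a [UL E]]].
by exists L, a; rewrite E map_f.
Qed.

End Vectors.

Lemma vecs_cons t s l : vecs t (s :: l) = vec t s |: vecs t l.
Proof. by apply/setP => v; rewrite in_setU1 !in_vecs. Qed.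

Lemma vecs_nil t : vecs t [::] = set0.
Proof. by apply/setP => v; rewrite !inE. Qed.

Lemma vec_ev_e t i : (i < t)%N -> vec t (ev t i) = e t i.+1.
Proof.
move=> it; rewrite (vec_ev (Ordinal it)); apply/rowP => j.
by rewrite !mxE eqxx -val_eqE /=; case: (_ == _).
Qed.

Lemma normal_forms_vecs t : (1 <= t <= 6)%N ->
  normal_forms t = map (vecs t) (normal_form_bits t).
Proof.
by case/andP; case: t => [|[|[|[|[|[|[|t]]]]]]] // _ _;
  rewrite /normal_forms /normal_form_bits /basis_bits /ev_sum /=;
  rewrite !vecs_cons vecs_nil vec_zeros ?vecD !vec_ev_e // ?vec_zeros ?addr0 ?addrA;
  repeat congr (_ :: _); apply/setP => v; rewrite !inE !orbA ?orbF.
Qed.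

Theorem proposition1p8 (t : nat) (M : {set 'rV['F_2]_t}) :
  (1 <= t <= 6)%N -> maximal_sidon M ->
  exists (L : 'M['F_2]_t) (a : 'rV['F_2]_t),
    L \in unitmx /\ affine_image L a M \in normal_forms t.
Proof.
move=> t_range HM.
have [L1 [a1 [UL1 M0 Mdelta]]] := maximal_sidon_normalize HM.
have [L2 [a2 [UL2 NF]]] := classification_sound (classification_check_small t_range)
  (maximal_sidon_affine a1 UL1 HM) M0 Mdelta.
exists (L1 *m L2), (a1 *m L2 + a2); split; first by rewrite unitmx_mul UL1 UL2.
by rewrite -affine_image_comp normal_forms_vecs.
Qed.
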